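(* Let $\mathbb{V}$ be a BIT speciale variety, $A$ a $\mathbb{V}$-algebra and $H\subseteq A$ a subset such that $0\in H$, $\theta(h_1,\dots,h_{n+1})\in H$ for all $h_1,\dots,h_{n+1}\in H$, and $\alpha_i(h,0)\in H$ for all $h\in H$ and all $1\le i\le n$. Then $\theta(H,\dots,H,0)=H$.
   Context: BIT speciale: the algebraic theory of $\mathbb{V}$ contains a constant $0$ and, for some $n\ge1$, binary terms $\alpha_1,\dots,\alpha_n$ and an $(n+1)$-ary term $\theta$ such that $\alpha_i(x,x)=0$ ($1\le i\le n$) and $\theta(\alpha_1(x,y),\dots,\alpha_n(x,y),y)=x$ are identities of $\mathbb{V}$. Notation: $\theta(H,\dots,H,a)=\{\theta(h_1,\dots,h_n,a)\mid h_1,\dots,h_n\in H\}$. *)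

From mathcomp Require Import all_boot.
Set Implicit Arguments. Unset Strict Implicit. Unset Printing Implicit Defensive.

(* The term operations of a V-algebra A for a BIT speciale variety V:
   the constant 0, the binary term operations alpha_1..alpha_n (indexed by 'I_n),
   and the (n+1)-ary term operation theta, written theta (h : 'I_n -> A) a
   for theta(h_1,...,h_n,a). *)
Definition BIT_speciale_identities (A : Type) (n : nat) (zero : A)
  (alpha : 'I_n -> A -> A -> A) (theta : ('I_n -> A) -> A -> A) : Prop :=
  (forall (i : 'I_n) (x : A), alpha i x x = zero) /\
  (forall x y : A, theta (fun i => alpha i x y) y = x).

Definition theta_img (A : Type) (n : nat) (theta : ('I_n -> A) -> A -> A)
  (H : A -> Prop) (a : A) : A -> Prop :=
  fun x => exists h : 'I_n -> A, (forall i, H (h i)) /\ x = theta h a.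

From mathcomp Require Import all_boot.

Lemma theta_img_closed (A : Type) (n : nat) (theta : ('I_n -> A) -> A -> A)
  (H : A -> Prop) (a : A) :
  H a -> (forall (h : 'I_n -> A) (b : A), (forall i, H (h i)) -> H b -> H (theta h b)) ->
  forall x, theta_img theta H a x -> H x.
Proof. by move=> Ha Htheta x [h [Hh ->]]; apply: Htheta. Qed.

Lemma theta_img_alpha (A : Type) (n : nat) (zero : A)
  (alpha : 'I_n -> A -> A -> A) (theta : ('I_n -> A) -> A -> A) (H : A -> Prop) :
  (forall x y, theta (fun i => alpha i x y) y = x) ->
  forall x, (forall i, H (alpha i x zero)) -> theta_img theta H zero x.
Proof. by move=> thetaK x Hx; exists (fun i => alpha i x zero). Qed.

Theorem lemma2p3 (A : Type) (n : nat) (hn : 1 <= n) (zero : A)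
  (alpha : 'I_n -> A -> A -> A) (theta : ('I_n -> A) -> A -> A)
  (hV : BIT_speciale_identities zero alpha theta)
  (H : A -> Prop)
  (H0 : H zero)
  (Htheta : forall (h : 'I_n -> A) (a : A),
      (forall i, H (h i)) -> H a -> H (theta h a))
  (Halpha : forall (i : 'I_n) (h : A), H h -> H (alpha i h zero)) :
  forall x : A, theta_img theta H zero x <-> H x.
Proof.
case: hV => _ thetaK x; split; first exact: theta_img_closed.
by move=> Hx; apply: theta_img_alpha => // i; apply: Halpha.
Qed.
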